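(* Let $\mathcal{A}_1$ and $\mathcal{A}_2$ be (unital, associative) algebras over a field $\mathbb{K}$ and let $\Phi\colon\mathcal{A}_1\to\mathcal{A}_2$ be a surjective algebra homomorphism such that $\ker(\Phi)$ is spanned as a $\mathbb{K}$-vector space by an idempotent $e$. If $\mathcal{A}_2$ is semisimple, then $\mathcal{A}_1$ is semisimple. *)

From mathcomp Require Import all_boot all_algebra.
Set Implicit Arguments. Unset Strict Implicit. Unset Printing Implicit Defensive.
Import GRing.Theory.
Local Open Scope ring_scope.

(* A left ideal of an algebra A: an additive subgroup stable under
   left multiplication (closure under opposites and scalars follows,
   since -x = (-1) * x and c *: x = c%:A * x). *)
Definition left_ideal (K : fieldType) (A : algType K) (I : A -> Prop) : Prop :=
  [/\ I 0, (forall x y, I x -> I y -> I (x + y)) & (forall a x, I x -> I (a * x))].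

(* A is semisimple: the left regular module A is semisimple, i.e. every
   left ideal (submodule of the regular module) is a direct summand. *)
Definition semisimple (K : fieldType) (A : algType K) : Prop :=
  forall I : A -> Prop, left_ideal I ->
    exists J : A -> Prop, [/\ left_ideal J,
      (forall x, I x -> J x -> x = 0) &
      (forall x, exists y z, [/\ I y, J z & x = y + z])].

(* Push a left ideal I of A1 forward to Phi(I), take a complement J2 of it in
   A2 and pull J2 back.  Modulo the kernel K e this gives a complement of I.
   If e is not in I, then I meets K e trivially and Phi^-1(J2) itself is a
   complement.  If e is in I, cut Phi^-1(J2) down to the left annihilator of
   e: a kernel element c e killed by e is c e * e = c e itself, hence 0, and
   every z splits as (z - z e) + z e with z e in K e, contained in I. *)
From mathcomp Require Import all_boot all_algebra.
From Stdlib Require Import Classical_Prop.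
Set Implicit Arguments. Unset Strict Implicit.
Import GRing.Theory.
Local Open Scope ring_scope.

Definition is_complement (K : fieldType) (A : algType K) (I J : A -> Prop) :=
  [/\ left_ideal J,
      (forall x, I x -> J x -> x = 0) &
      (forall x, exists y z, [/\ I y, J z & x = y + z])].

Section LeftIdeals.
Variables (K : fieldType) (A : algType K).
Implicit Types (I J : A -> Prop) (x y : A).

Lemma left_idealZ I (c : K) x : left_ideal I -> I x -> I (c *: x).
Proof. by case=> _ _ IM Ix; rewrite -mulr_algl; apply: IM. Qed.

Lemma left_idealI I J :
  left_ideal I -> left_ideal J -> left_ideal (fun x => I x /\ J x).
Proof.
case=> I0 ID IM [J0 JD JM]; split=> //.
- by move=> x y [Ix Jx] [Iy Jy]; split; [apply: ID | apply: JD].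
- by move=> a x [Ix Jx]; split; [apply: IM | apply: JM].
Qed.

Lemma left_ideal_annihilator (e : A) : left_ideal (fun x => x * e = 0).
Proof.
split; first by rewrite mul0r.
- by move=> x y xe0 ye0; rewrite mulrDl xe0 ye0 addr0.
- by move=> a x xe0; rewrite -mulrA xe0 mulr0.
Qed.

End LeftIdeals.

Section Morphism.
Variables (K : fieldType) (A1 A2 : algType K) (Phi : {rmorphism A1 -> A2}).

Lemma left_ideal_preimage (J : A2 -> Prop) :
  left_ideal J -> left_ideal (fun x => J (Phi x)).
Proof.
case=> J0 JD JM; split; first by rewrite rmorph0.
- by move=> x y Jx Jy; rewrite rmorphD; apply: JD.
- by move=> a x Jx; rewrite rmorphM; apply: JM.
Qed.

Lemma left_ideal_image (I : A1 -> Prop) :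
  (forall y, exists x, Phi x = y) ->
  left_ideal I -> left_ideal (fun y => exists2 x, I x & Phi x = y).
Proof.
move=> Phi_surj [I0 ID IM]; split; first by exists 0; rewrite ?rmorph0.
- move=> _ _ [x Ix <-] [y Iy <-].
  by exists (x + y); [apply: ID | rewrite rmorphD].
- move=> a _ [x Ix <-]; have [b <-] := Phi_surj a.
  by exists (b * x); [apply: IM | rewrite rmorphM].
Qed.

Variable e : A1.
Hypothesis kerPhi : forall x, Phi x = 0 <-> exists c : K, x = c *: e.

Lemma kerPhi_e : Phi e = 0.
Proof. by apply/kerPhi; exists 1; rewrite scale1r. Qed.

Lemma kerPhi_idem x : e * e = e -> Phi x = 0 -> x * e = x.
Proof. by move=> ee /kerPhi[c ->]; rewrite -scalerAl ee. Qed.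

Lemma kerPhi_left_ideal_mem (I : A1 -> Prop) x :
  left_ideal I -> ~ I e -> I x -> Phi x = 0 -> x = 0.
Proof.
move=> hI Ie Ix /kerPhi[c xE]; have [c0|c_neq0] := eqVneq c 0.
  by rewrite xE c0 scale0r.
by case: Ie; have := left_idealZ c^-1 hI Ix; rewrite xE scalerA mulVf ?scale1r.
Qed.

Lemma kerPhi_sum_eq x y z : Phi x = Phi y + Phi z ->
  exists c : K, x = y + z + c *: e.
Proof.
move=> PxE; have [c cE] : exists c : K, x - (y + z) = c *: e.
  by apply/kerPhi/eqP; rewrite rmorphB rmorphD subr_eq0; apply/eqP.
by exists c; rewrite -cE addrC subrK.
Qed.

Section Complement.
Hypotheses (Phi_surj : forall y, exists x, Phi x = y) (ee : e * e = e).
Variables (I : A1 -> Prop) (J2 : A2 -> Prop).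
Hypotheses (hI : left_ideal I)
  (hJ2 : is_complement (fun y => exists2 x, I x & Phi x = y) J2).

Lemma complement_image_meet x : I x -> J2 (Phi x) -> Phi x = 0.
Proof. by case: hJ2 => _ meet0 _ Ix Jx; apply: meet0 => //; exists x. Qed.

Lemma complement_image_split x :
  exists y z (c : K), [/\ I y, J2 (Phi z) & x = y + z + c *: e].
Proof.
case: hJ2 => _ _ /(_ (Phi x))[_ [z2 [[y Iy <-] Jz2 PxE]]].
have [z zE] := Phi_surj z2; rewrite -zE in Jz2 PxE.
by have [c xE] := kerPhi_sum_eq PxE; exists y, z, c.
Qed.

Lemma complement_preimage : ~ I e -> is_complement I (fun x => J2 (Phi x)).
Proof.
move=> Ie; have [hJ2i _ _] := hJ2; split; first exact: left_ideal_preimage.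
  move=> x Ix Jx; apply: (kerPhi_left_ideal_mem hI Ie Ix).
  exact: complement_image_meet.
move=> x; have [y [z [c [Iy Jz ->]]]] := complement_image_split x.
exists y, (z + c *: e); split=> //; last by rewrite addrA.
have Pce0 : Phi (c *: e) = 0 by apply/kerPhi; exists c.
by rewrite rmorphD Pce0 addr0.
Qed.

Lemma complement_preimage_annihilator :
  I e -> is_complement I (fun x => J2 (Phi x) /\ x * e = 0).
Proof.
move=> Ie; have [hJ2i _ _] := hJ2; split.
- exact/left_idealI/left_ideal_annihilator/left_ideal_preimage.
- move=> x Ix [Jx xe0].
  by rewrite -xe0 (kerPhi_idem ee (complement_image_meet Ix Jx)).
move=> x; have [y [z [c [Iy Jz ->]]]] := complement_image_split x.
have [d zeE] : exists d : K, z * e = d *: e.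
  by apply/kerPhi; rewrite rmorphM kerPhi_e mulr0.
exists (y + c *: e + z * e), (z - z * e); split.
- have [_ ID _] := hI; rewrite zeE.
  by apply: ID (ID _ _ Iy (left_idealZ c hI Ie)) (left_idealZ d hI Ie).
- by rewrite rmorphB rmorphM kerPhi_e mulr0 subr0 mulrBl -mulrA ee subrr.
- by rewrite addrAC -!addrA; congr (_ + (_ + _)); rewrite addrCA subrr addr0.
Qed.

End Complement.
End Morphism.

Theorem proposition4p7 (K : fieldType) (A1 A2 : algType K)
    (Phi : {lrmorphism A1 -> A2}) (e : A1) :
  (forall y : A2, exists x : A1, Phi x = y) ->
  e * e = e ->
  (forall x : A1, Phi x = 0 <-> exists c : K, x = c *: e) ->
  semisimple A2 -> semisimple A1.
Proof.
move=> Phi_surj ee kerPhi ss2 I hI.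
have [J2 hJ2] := ss2 _ (left_ideal_image Phi_surj hI).
have [Ie|Ie] := classic (I e).
- by eexists; apply: (complement_preimage_annihilator kerPhi _ ee hI hJ2 Ie).
- by eexists; apply: (complement_preimage kerPhi _ hI hJ2 Ie).
Qed.
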